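(* Let $A$ be a $\mathbb{Q}$-domain, $K=\operatorname{frac}(A)$, $B=A^{[n]}$ and $D\in \operatorname{LND}_A(B)$. Let $D_K$ denote the extension of $D$ to $K\otimes_A B=K^{[n]}$. Assume that $\operatorname{rank} D=\operatorname{rank} D_K$. If $D_K$ is rigid, then $D$ is rigid.
   Context: All rings are commutative integral domains containing $\mathbb{Q}$. For a ring $A$, $A^{[n]}$ denotes an $A$-algebra isomorphic to the polynomial ring in $n$ variables over $A$. If $B=A^{[n]}$, a coordinate system of $B$ over $A$ is an ordered $n$-tuple $(X_1,\dots,X_n)$ of elements of $B$ with $A[X_1,\dots,X_n]=B$; $\Gamma(B)$ denotes the set of all such. An $A$-derivation $D$ of $B$ is locally nilpotent if for every $x\in B$ there is $s>0$ with $D^s(x)=0$; $\operatorname{LND}_A(B)$ is the set of locally nilpotent $A$-derivations of $B$. The rank of $D$ is the least integer $r\ge 0$ such that there is a coordinate system $(X_1,\dots,X_n)$ of $B$ over $A$ with $A[X_1,\dots,X_{n-r}]\subset\ker D$. For $D$ of rank $r$, $\Gamma_D(B)$ is the set of $(X_1,\dots,X_n)\in\Gamma(B)$ with $A[X_1,\dots,X_{n-r}]\subset \ker D$. $D$ is rigid if $A[X_1,\dots,X_{n-r}]=A[X_1',\dots,X_{n-r}']$ whenever $(X_1,\dots,X_n)$ and $(X_1',\dots,X_n')$ both belong to $\Gamma_D(B)$. (The same definitions apply over $K$ to $D_K$.) *)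

From HB Require Import structures.
From mathcomp Require Import all_boot all_order all_algebra.
Set Implicit Arguments. Unset Strict Implicit. Unset Printing Implicit Defensive.
Import Order.TTheory GRing.Theory Num.Theory.
Local Open Scope ring_scope.

(* Polynomial ring in n variables over R, built as iterated univariate
   polynomial rings: R^[0] = R, R^[m+1] = (R^[m])[T]. *)
Fixpoint mpoly (R : comNzRingType) (n : nat) : comNzRingType :=
  if n is m.+1 then ({poly mpoly R m} : comNzRingType) else R.

Fixpoint cm (R : comNzRingType) (n : nat) : R -> mpoly R n :=
  match n return R -> mpoly R n with
  | 0 => fun a => a
  | m.+1 => fun a => ((@cm R m a)%:P : {poly mpoly R m})
  end.

Fixpoint mapm (R S : comNzRingType) (f : R -> S) (n : nat) : mpoly R n -> mpoly S n :=
  match n return mpoly R n -> mpoly S n with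
  | 0 => f
  | m.+1 => fun p => (map_poly (@mapm R S f m) (p : {poly mpoly R m}) : {poly mpoly S m})
  end.

(* evaluation of a polynomial in n variables at a sequence xs of elements of
   an R-algebra S (structure map phi); the outer variable is sent to head xs *)
Fixpoint evalm (R S : comNzRingType) (phi : R -> S) (n : nat) : mpoly R n -> seq S -> S :=
  match n return mpoly R n -> seq S -> S with
  | 0 => fun c _ => phi c
  | m.+1 => fun p xs =>
      \sum_(i < size (p : {poly mpoly R m}))
        @evalm R S phi m ((p : {poly mpoly R m})`_i) (behead xs) * (head 0 xs) ^+ i
  end.

Arguments cm {R} n.
Arguments mapm {R S} f n.
Arguments evalm {R S} phi n.

Definition in_subalg (R S : comNzRingType) (phi : R -> S) (xs : seq S) (b : S) : Prop :=
  exists p : mpoly R (size xs), b = evalm phi (size xs) p xs.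

(* R contains Q *)
Definition containsQ (R : comUnitRingType) : Prop :=
  forall m : nat, (0 < m)%N -> (m%:R : R) \is a GRing.unit.

Definition isDer (R S : comNzRingType) (phi : R -> S) (D : S -> S) : Prop :=
  [/\ forall x y, D (x + y) = D x + D y,
      forall a x, D (phi a * x) = phi a * D x &
      forall x y, D (x * y) = x * D y + y * D x].

Definition isLND (R S : comNzRingType) (phi : R -> S) (D : S -> S) : Prop :=
  isDer phi D /\ forall x, exists s : nat, (0 < s)%N /\ iter s D x = 0.

Definition coord_sys (R S : comNzRingType) (phi : R -> S) (n : nat) (X : seq S) : Prop :=
  size X = n /\ forall b, in_subalg phi X b.

Definition killed (R S : comNzRingType) (phi : R -> S) (D : S -> S) (xs : seq S) : Prop :=
  forall b, in_subalg phi xs b -> D b = 0.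

Definition GammaD (R S : comNzRingType) (phi : R -> S) (n : nat) (D : S -> S)
    (r : nat) (X : seq S) : Prop :=
  coord_sys phi n X /\ killed phi D (take (n - r) X).

Definition has_rank (R S : comNzRingType) (phi : R -> S) (n : nat) (D : S -> S)
    (r : nat) : Prop :=
  (exists X, GammaD phi n D r X) /\
  forall r', (exists X, GammaD phi n D r' X) -> (r <= r')%N.

Definition rigid (R S : comNzRingType) (phi : R -> S) (n : nat) (D : S -> S) : Prop :=
  forall r, has_rank phi n D r ->
  forall X X', GammaD phi n D r X -> GammaD phi n D r X' ->
  forall b, in_subalg phi (take (n - r) X) b <-> in_subalg phi (take (n - r) X') b.

From HB Require Import structures.
From mathcomp Require Import all_boot all_order all_algebra.
Set Implicit Arguments. Unset Strict Implicit. Unset Printing Implicit Defensive.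
Import Order.TTheory GRing.Theory Num.Theory.
Local Open Scope ring_scope.

(* Let X, X' be in Gamma_D and k = n - r.  Their images in K^[n] are coordinate
   systems whose first k members are killed by D_K, so they lie in Gamma_(D_K)
   and rigidity of D_K gives K[X_1..X_k] = K[X'_1..X'_k].  It remains to see
   that K[X'_1..X'_k] meets A^[n] in A[X'_1..X'_k] ([subalg_descent]): write
   b = H(X') with H in A^[n]; in K^[n] we have H(X') = G(X'_1..X'_k), and a
   coordinate system over a Q-algebra is algebraically independent, so
   H = G(T_1..T_k).  Thus the partial derivatives of H in T_(k+1)..T_n vanish,
   hence (as Q is contained in A) H is a polynomial in T_1..T_k over A, and b
   lies in A[X'_1..X'_k]. *)

(* A function agreeing pointwise with a ring morphism is itself one; this is
   how the recursively defined maps [cm], [mapm] and [evalm] get their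
   [{rmorphism _ -> _}] structures, by induction on the number of variables. *)
Section MorphismOfEq.
Variables (R S : pzSemiRingType) (f : R -> S) (g : {rmorphism R -> S}).
Hypothesis gf : g =1 f.

Lemma nmod_morphism_eq : nmod_morphism f.
Proof. by split=> [|x y]; rewrite -!gf ?rmorph0 ?rmorphD. Qed.

Lemma monoid_morphism_eq : monoid_morphism f.
Proof. by split=> [|x y]; rewrite -!gf ?rmorph1 ?rmorphM. Qed.
End MorphismOfEq.

Lemma cm_rmorph_spec (R : comNzRingType) n : {g : {rmorphism R -> mpoly R n} | g =1 cm n}.
Proof.
elim: n => [|n [g eg]]; first by exists idfun.
by exists (polyC \o g : {rmorphism R -> {poly mpoly R n}}) => a /=; rewrite eg.
Qed.

Section CmMorphism.
Variables (R : comNzRingType) (n : nat).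
Fact cm_nmod_morphism : nmod_morphism (@cm R n).
Proof. exact: nmod_morphism_eq (svalP (cm_rmorph_spec R n)). Qed.
Fact cm_monoid_morphism : monoid_morphism (@cm R n).
Proof. exact: monoid_morphism_eq (svalP (cm_rmorph_spec R n)). Qed.
HB.instance Definition _ := GRing.isNmodMorphism.Build R (mpoly R n) (cm n) cm_nmod_morphism.
HB.instance Definition _ :=
  GRing.isMonoidMorphism.Build R (mpoly R n) (cm n) cm_monoid_morphism.
End CmMorphism.

Section MapmMorphism.
Variables (R S : comNzRingType) (f : {rmorphism R -> S}) (n : nat).

Lemma mapm_rmorph_spec : {g : {rmorphism mpoly R n -> mpoly S n} | g =1 mapm f n}.
Proof.
elim: n => [|m [g eg]]; first by exists f.
by exists (map_poly g : {rmorphism {poly mpoly R m} -> {poly mpoly S m}}); apply: eq_map_poly.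
Qed.

Fact mapm_nmod_morphism : nmod_morphism (mapm f n).
Proof. exact: nmod_morphism_eq (svalP mapm_rmorph_spec). Qed.
Fact mapm_monoid_morphism : monoid_morphism (mapm f n).
Proof. exact: monoid_morphism_eq (svalP mapm_rmorph_spec). Qed.
HB.instance Definition _ := GRing.isNmodMorphism.Build _ _ (mapm f n) mapm_nmod_morphism.
HB.instance Definition _ := GRing.isMonoidMorphism.Build _ _ (mapm f n) mapm_monoid_morphism.

End MapmMorphism.

Lemma mapm_cm (R S : comNzRingType) (f : {rmorphism R -> S}) n a :
  mapm f n (cm n a) = cm n (f a).
Proof. elim: n => [|m IH] //=; rewrite map_polyC; exact: congr1 _ IH. Qed.

Definition evalm_at (R S : comNzRingType) (phi : R -> S) (m : nat) (xs : seq S) :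
  mpoly R m -> S := fun p => evalm phi m p xs.
Arguments evalm_at {R S} phi m xs p /.

Lemma evalm_atE (R S : comNzRingType) (phi : R -> S) m xs p :
  evalm_at phi m xs p = evalm phi m p xs.
Proof. by []. Qed.

Section EvalmMorphism.
Variables (R S : comNzRingType) (phi : {rmorphism R -> S}).

Lemma evalm_horner m (p : mpoly R m.+1) xs :
  evalm phi m.+1 p xs =
  (map_poly (evalm_at phi m (behead xs)) (p : {poly mpoly R m})).[head 0 xs].
Proof.
rewrite (horner_coef_wide _ (size_poly _ _)) /=.
by apply: eq_bigr => i _; rewrite coef_poly ltn_ord.
Qed.

Lemma evalm_rmorph_spec m xs : {g : {rmorphism mpoly R m -> S} | g =1 evalm_at phi m xs}.
Proof.
elim: m xs => [|m IH] xs; first by exists phi.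
have [g eg] := IH (behead xs).
exists (horner_eval (head 0 xs) \o map_poly g : {rmorphism {poly mpoly R m} -> S}) => p /=.
by rewrite -[RHS]/(evalm phi m.+1 p xs) evalm_horner /horner_eval (eq_map_poly eg).
Qed.

Variables (m : nat) (xs : seq S).
Fact evalm_nmod_morphism : nmod_morphism (evalm_at phi m xs).
Proof. exact: nmod_morphism_eq (svalP (evalm_rmorph_spec m xs)). Qed.
Fact evalm_monoid_morphism : monoid_morphism (evalm_at phi m xs).
Proof. exact: monoid_morphism_eq (svalP (evalm_rmorph_spec m xs)). Qed.
HB.instance Definition _ :=
  GRing.isNmodMorphism.Build _ _ (evalm_at phi m xs) evalm_nmod_morphism.
HB.instance Definition _ :=
  GRing.isMonoidMorphism.Build _ _ (evalm_at phi m xs) evalm_monoid_morphism.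
End EvalmMorphism.

Section EvalmTheory.
Variables (R S : comNzRingType) (phi : {rmorphism R -> S}).

Lemma evalm_cm m a xs : evalm phi m (cm m a) xs = phi a.
Proof.
elim: m xs => [|m IH] xs //=.
by rewrite -[LHS]/(evalm phi m.+1 _ xs) evalm_horner map_polyC hornerC /= IH.
Qed.

Lemma evalm_comp (T : comNzRingType) (g : {rmorphism S -> T}) m p xs :
  g (evalm phi m p xs) = evalm (g \o phi) m p (map g xs).
Proof.
elim: m p xs => [|m IH] p xs //=; rewrite rmorph_sum; apply: eq_bigr => i _.
by rewrite rmorphM rmorphXn IH behead_map; case: xs => [|x s] /=; rewrite ?rmorph0.
Qed.

Lemma evalm_mapm (R' : comNzRingType) (h : {rmorphism R' -> R}) m p xs :
  evalm phi m (mapm h m p) xs = evalm (phi \o h) m p xs.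
Proof.
elim: m p xs => [|m IH] p xs //=.
rewrite -[LHS]/(evalm phi m.+1 _ xs) -[RHS]/(evalm (phi \o h) m.+1 _ xs) !evalm_horner.
by rewrite -map_poly_comp; congr (_.[_]); apply: eq_map_poly => c /=; rewrite IH.
Qed.

Lemma evalm_ind (P : S -> Prop) m p xs :
  (forall x y, P x -> P y -> P (x + y)) -> (forall x y, P x -> P y -> P (x * y)) ->
  (forall a, P (phi a)) -> (forall x, x \in xs -> P x) -> P (evalm phi m p xs).
Proof.
move=> PD PM PC Pxs; elim: m p xs Pxs => [|m IH] p xs Pxs //=.
have P0 : P 0 by rewrite -(rmorph0 phi).
have P1 : P 1 by rewrite -(rmorph1 phi).
apply: (big_ind P P0 PD) => i _; apply: (PM).
  by apply: IH => x /mem_behead; apply: Pxs.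
have Ph : P (head 0 xs) by case: xs Pxs => [|x s] Pxs //=; apply: Pxs; rewrite inE eqxx.
by elim: (nat_of_ord i) => [|k IHk]; rewrite ?expr0 // exprS; apply: (PM).
Qed.

End EvalmTheory.

Lemma evalm_ext (R S : comNzRingType) (phi psi : R -> S) m p xs :
  phi =1 psi -> evalm phi m p xs = evalm psi m p xs.
Proof. by move=> e; elim: m p xs => [|m IH] p xs //=; apply: eq_bigr => i _; rewrite IH. Qed.

(* The standard variables T_1, ..., T_n of R^[n]: T_1 is the outer variable
   and T_(i+1) is the constant polynomial T_i of R^[n-1]. *)
Fixpoint var (R : comNzRingType) (n i : nat) : mpoly R n :=
  match n return mpoly R n with
  | 0 => 0
  | m.+1 => if i is i'.+1 then ((var R m i')%:P : {poly mpoly R m})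
            else ('X : {poly mpoly R m})
  end.

Fixpoint vars (R : comNzRingType) (n : nat) : seq (mpoly R n) :=
  match n return seq (mpoly R n) with
  | 0 => [::]
  | m.+1 => ('X : {poly mpoly R m}) :: map (fun c => (c%:P : {poly mpoly R m})) (vars R m)
  end.

Lemma size_vars (R : comNzRingType) n : size (vars R n) = n.
Proof. by elim: n => [|n IH] //=; rewrite size_map IH. Qed.

Lemma nth_vars (R : comNzRingType) n i : (i < n)%N -> nth 0 (vars R n) i = var R n i.
Proof. by elim: n i => [|n IH] [|i] //= lt; rewrite (nth_map 0) ?size_vars // IH. Qed.

Lemma evalm_var (R S : comNzRingType) (phi : {rmorphism R -> S}) m i xs :
  (i < m)%N -> evalm phi m (var R m i) xs = nth 0 xs i.
Proof.
elim: m i xs => [|m IH] [|i] xs //= lt; rewrite -[LHS]/(evalm phi m.+1 _ xs) evalm_horner.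
  by rewrite map_polyX hornerX; case: xs.
by rewrite map_polyC hornerC /= IH //; case: xs => [|x s] //=; rewrite nth_nil.
Qed.

Lemma horner_polyC_X (R : comNzRingType) (c : {poly R}) : c^:P.['X] = c.
Proof.
rewrite (horner_coef_wide _ (eq_leq (size_map_polyC c))) -[RHS]coefK poly_def.
by apply: eq_bigr => i _; rewrite coef_map mul_polyC.
Qed.

Lemma evalm_vars (R : comNzRingType) n (c : mpoly R n) : evalm (cm n) n c (vars R n) = c.
Proof.
elim: n c => [|m IH] c //; rewrite evalm_horner -[RHS]horner_polyC_X /=.
congr (_.[_]); apply: eq_map_poly => c0 /=.
by rewrite -[in RHS](IH c0) (evalm_comp (cm m) polyC); apply: evalm_ext.
Qed.

Lemma map_evalm_vars (R S : comNzRingType) (phi : {rmorphism R -> S}) n (ys : seq S) :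
  size ys = n -> map (evalm_at phi n ys) (vars R n) = ys.
Proof.
move=> sz; apply: (@eq_from_nth _ 0); first by rewrite size_map size_vars sz.
move=> i; rewrite size_map size_vars => lt.
by rewrite (nth_map 0) ?size_vars //= nth_vars // evalm_var.
Qed.

Lemma evalm_subst (R : comNzRingType) n (ys : seq (mpoly R n)) m (p : mpoly R m) k :
  size ys = n ->
  evalm (cm n) n (evalm (cm n) m p (take k (vars R n))) ys = evalm (cm n) m p (take k ys).
Proof.
move=> sz; rewrite -[LHS]/(evalm_at (cm n) n ys _) evalm_comp map_take map_evalm_vars //.
by apply: evalm_ext => a /=; rewrite evalm_cm.
Qed.

Lemma in_subalgP (R S : comNzRingType) (phi : R -> S) xs n b :
  size xs = n -> in_subalg phi xs b -> exists p : mpoly R n, b = evalm phi n p xs.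
Proof. by move=> <-. Qed.

Lemma coord_sysP (R S : comNzRingType) (phi : R -> S) n X b :
  coord_sys phi n X -> exists p : mpoly R n, b = evalm phi n p X.
Proof. by case=> sz gen; exact: in_subalgP sz (gen b). Qed.

Section Subalgebra.
Variables (R S : comNzRingType) (phi : {rmorphism R -> S}) (xs : seq S).

Lemma in_subalgD x y : in_subalg phi xs x -> in_subalg phi xs y -> in_subalg phi xs (x + y).
Proof.
by move=> [p ->] [q ->]; exists (p + q); rewrite -!/(evalm_at phi _ xs _) rmorphD.
Qed.

Lemma in_subalgM x y : in_subalg phi xs x -> in_subalg phi xs y -> in_subalg phi xs (x * y).
Proof.
by move=> [p ->] [q ->]; exists (p * q); rewrite -!/(evalm_at phi _ xs _) rmorphM.
Qed.

Lemma in_subalg_const a : in_subalg phi xs (phi a).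
Proof. by exists (cm _ a); rewrite evalm_cm. Qed.

Lemma in_subalg_mem x : x \in xs -> in_subalg phi xs x.
Proof.
by move=> xin; exists (var R (size xs) (index x xs)); rewrite evalm_var ?index_mem ?nth_index.
Qed.

Lemma in_subalgX x k : in_subalg phi xs x -> in_subalg phi xs (x ^+ k).
Proof.
move=> hx; elim: k => [|k IH]; last by rewrite exprS; apply: in_subalgM.
by rewrite expr0 -(rmorph1 phi); apply: in_subalg_const.
Qed.

Lemma in_subalg_evalm m p : in_subalg phi xs (evalm phi m p xs).
Proof.
apply: evalm_ind; [exact: in_subalgD | exact: in_subalgM | exact: in_subalg_const |].
exact: in_subalg_mem.
Qed.

End Subalgebra.

Lemma in_subalg_trans (R S : comNzRingType) (phi : {rmorphism R -> S}) xs ys b :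
  (forall x, x \in xs -> in_subalg phi ys x) -> in_subalg phi xs b -> in_subalg phi ys b.
Proof.
move=> sub [p ->]; apply: evalm_ind => //; [exact: in_subalgD | exact: in_subalgM |].
exact: in_subalg_const.
Qed.

Lemma evalm_wide (R S : comNzRingType) (phi : {rmorphism R -> S}) m (p : mpoly R m.+1) xs N :
  (size (p : {poly mpoly R m}) <= N)%N ->
  evalm phi m.+1 p xs =
  \sum_(i < N) evalm phi m (p : {poly mpoly R m})`_i (behead xs) * head 0 xs ^+ i.
Proof.
move=> le; rewrite evalm_horner (horner_coef_wide _ (leq_trans (size_poly _ _) le)).
by apply: eq_bigr => i _; rewrite coef_map.
Qed.

Section Derivations.
Variables (R S : comNzRingType) (phi : {rmorphism R -> S}) (d : S -> S).

Lemma isDer_intro :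
  {morph d : x y / x + y} -> (forall x y, d (x * y) = x * d y + y * d x) ->
  (forall a, d (phi a) = 0) -> isDer phi d.
Proof. by move=> dD dM dC; split=> // a x; rewrite dM dC mulr0 addr0. Qed.

Hypothesis hd : isDer phi d.

Lemma der0 : d 0 = 0.
Proof. by have [dD _ _] := hd; apply: (@addrI _ (d 0)); rewrite -dD !addr0. Qed.

Lemma der1 : d 1 = 0.
Proof.
have [_ _ dM] := hd; apply: (@addrI _ (d 1)); rewrite addr0.
by have := dM 1 1; rewrite mulr1 mul1r => <-.
Qed.

Lemma der_const a : d (phi a) = 0.
Proof. by have [_ dZ _] := hd; have := dZ a 1; rewrite mulr1 der1 mulr0. Qed.

Lemma der_sum (I : Type) (r : seq I) (P : pred I) (F : I -> S) :
  d (\sum_(i <- r | P i) F i) = \sum_(i <- r | P i) d (F i).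
Proof. by have [dD _ _] := hd; apply: (big_morph d dD der0). Qed.

Lemma derX x k : d (x ^+ k) = x ^+ k.-1 *+ k * d x.
Proof.
have [_ _ dM] := hd; elim: k => [|k IH].
  by rewrite expr0 der1 mulr0n mul0r.
rewrite exprS dM IH; case: k IH => [|k] IH /=.
  by rewrite !mulr0n mul0r mulr0 add0r mulr1n.
by rewrite mulrA mulrnAr -exprS -mulrDl -mulrSr.
Qed.

End Derivations.

Fixpoint pd (R : comNzRingType) (n i : nat) {struct n} : mpoly R n -> mpoly R n :=
  match n return mpoly R n -> mpoly R n with
  | 0 => fun _ => 0
  | m.+1 => fun p =>
     match i with
     | i'.+1 => (map_poly (@pd R m i') (p : {poly mpoly R m}) : {poly mpoly R m})
     | 0 => deriv (p : {poly mpoly R m})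
     end
  end.

Lemma pd_der (R : comNzRingType) n i : isDer (@cm R n) (@pd R n i).
Proof.
elim: n i => [|m IH] i; first by apply: isDer_intro => [x y|x y|a] /=; rewrite ?mulr0 ?addr0.
case: i => [|i]; apply: isDer_intro => [x y|x y|a] /=.
- exact: derivD.
- by rewrite derivM addrC [_^`() * _]mulrC.
- exact: derivC.
- have [dD _ _] := IH i.
  by apply/polyP=> j; rewrite coefD !coef_map_id0 ?(der0 (IH i)) // coefD dD.
- have [_ _ dM] := IH i.
  apply/polyP=> j; rewrite [X in _ + X]mulrC coefD !coefM !coef_map_id0 ?(der0 (IH i)) //.
  rewrite coefM (der_sum (IH i)) -big_split /=.
  by apply: eq_bigr => k _; rewrite dM !coef_map_id0 ?(der0 (IH i)) // [y`_ _ * _]mulrC.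
- apply/polyP=> j; rewrite coef_map_id0 ?(der0 (IH i)) // !coefC.
  by case: (j == 0%N); rewrite ?(der_const (IH i)) ?(der0 (IH i)).
Qed.

Lemma size_deriv_le (R : nzSemiRingType) (p : {poly R}) : (size p^`() <= (size p).-1)%N.
Proof. exact: size_poly. Qed.

Lemma chain_rule (R S : comNzRingType) (phi : {rmorphism R -> S}) (d : S -> S) m
    (p : mpoly R m) xs :
  isDer phi d ->
  d (evalm phi m p xs) = \sum_(i < m) evalm phi m (pd i p) xs * d (nth 0 xs i).
Proof.
move=> hd; have [_ _ dM] := hd.
elim: m p xs => [|m IH] p xs; first by rewrite big_ord0 /= (der_const hd).
set h := head 0 xs; set xs' := behead xs; set E := fun c => evalm phi m c xs'.
have expand : d (evalm phi m.+1 p xs) = \sum_(j < size (p : {poly mpoly R m}))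
    (E p`_j * (h ^+ j.-1 *+ j * d h) + h ^+ j * d (E p`_j)).
  by rewrite /= (der_sum hd); apply: eq_bigr => j _; rewrite dM (derX hd).
have outer : \sum_(j < size (p : {poly mpoly R m})) E p`_j * (h ^+ j.-1 *+ j * d h) =
    evalm phi m.+1 (pd 0 p) xs * d h.
  rewrite (evalm_wide _ _ (size_deriv_le _)) big_distrl /=.
  case: (size _) => [|N]; first by rewrite !big_ord0.
  rewrite big_ord_recl /= mulr0n mul0r mulr0 add0r; apply: eq_bigr => j _.
  rewrite coef_deriv -evalm_atE rmorphMn /= /bump /= add1n add0n.
  by rewrite mulrA mulrnAr !mulrnAl.
have inner : \sum_(j < size (p : {poly mpoly R m})) h ^+ j * d (E p`_j) =
    \sum_(i < m) evalm phi m.+1 (pd i.+1 p) xs * d (nth 0 xs' i).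
  under eq_bigr => j _ do rewrite IH big_distrr.
  rewrite exchange_big; apply: eq_bigr => i _.
  have le : (size (pd i.+1 p : {poly mpoly R m}) <= size (p : {poly mpoly R m}))%N.
    exact: size_poly.
  rewrite (evalm_wide _ _ le) big_distrl; apply: eq_bigr => j _.
  rewrite coef_map_id0 /=; last exact: der0 (pd_der R m i).
  by rewrite mulrA [h ^+ j * _]mulrC.
rewrite expand big_split outer inner big_ord_recl nth0 /=; congr (_ + _).
by apply: eq_bigr => i _; rewrite /bump /= add1n nth_behead.
Qed.

Lemma pd_var (R : comNzRingType) n i j : (i < n)%N -> (j < n)%N ->
  pd i (var R n j) = (j == i)%:R.
Proof.
elim: n i j => [|m IH] [|i] [|j] //= lti ltj.
- by rewrite derivX.
- by rewrite derivC.
- apply/polyP=> k; rewrite coef_map_id0 ?(der0 (pd_der R m i)) // coefX coef0.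
  by case: (k == 1%N); rewrite ?(der1 (pd_der R m i)) ?(der0 (pd_der R m i)).
- apply/polyP=> k; rewrite coef_map_id0 ?(der0 (pd_der R m i)) // coefC -polyC_natr coefC.
  by case: (k == 0%N); [rewrite IH | exact: der0 (pd_der R m i)].
Qed.

Lemma pd_evalm_take_vars (R : comNzRingType) n m (G : mpoly R m) k i :
  (k <= i)%N -> (i < n)%N -> pd i (evalm (cm n) m G (take k (vars R n))) = 0.
Proof.
move=> ki lti; rewrite (chain_rule _ _ (pd_der R n i)); apply: big1 => j _.
suff -> : pd i (nth 0 (take k (vars R n)) j) = 0 by rewrite mulr0.
have [jk|kj] := ltnP j k.
  have jn : (j < n)%N := leq_trans jk (leq_trans ki (ltnW lti)).
  by rewrite nth_take // nth_vars // pd_var // ltn_eqF // (leq_trans jk ki).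
by rewrite nth_default ?(der0 (pd_der R n i)) // size_take_min geq_min kj.
Qed.

Lemma pd_mapm (R S : comNzRingType) (f : {rmorphism R -> S}) n i (p : mpoly R n) :
  pd i (mapm f n p) = mapm f n (pd i p).
Proof.
elim: n i p => [|m IH] i p /=; first by rewrite rmorph0.
case: i => [|i]; first exact: deriv_map.
by apply/polyP=> k; rewrite !coef_map_id0 ?(der0 (pd_der _ m i)) ?rmorph0 ?IH.
Qed.

Lemma mapm_inj (R S : comNzRingType) (f : {rmorphism R -> S}) n :
  injective f -> injective (mapm f n).
Proof.
move=> finj; elim: n => [|m IH] //= p q /polyP e; apply/polyP => k.
by apply: IH; have := e k; rewrite !coef_map.
Qed.

Section CharacteristicZero.
Variables (R : comUnitRingType) (hQ : containsQ R).

Lemma mulrn_eq0_Q n (c : mpoly R n) k : (0 < k)%N -> c *+ k = 0 -> c = 0.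
Proof.
move=> k_gt0 ck; have u := hQ k_gt0.
have E : c *+ k = c * cm n (k%:R : R) by rewrite rmorph_nat mulr_natr.
by rewrite -[c]mulr1 -(rmorph1 (cm n)) -(mulrV u) rmorphM mulrA -E ck mul0r.
Qed.

Lemma pd_const n (p : mpoly R n) :
  (forall i, (i < n)%N -> pd i p = 0) -> exists a, p = cm n a.
Proof.
elim: n p => [|m IH] p hp; first by exists p.
have sz : (size (p : {poly mpoly R m}) <= 1)%N.
  apply/leq_sizeP => [[|j]] // _; apply: (@mulrn_eq0_Q m _ j.+1) => //.
  by rewrite -coef_deriv [_^`()](hp 0%N isT) coef0.
have Ep := size1_polyC sz.
have [a Ea] : exists a, (p : {poly mpoly R m})`_0 = cm m a.
  apply: IH => i lti; have := hp i.+1 lti; rewrite /= Ep => /polyP /(_ 0%N).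
  by rewrite coef_map_id0 ?(der0 (pd_der R m i)) // coefC coef0.
by exists a; rewrite Ep Ea.
Qed.

Lemma pd_sub n k (p : mpoly R n) :
  (forall i, (k <= i)%N -> (i < n)%N -> pd i p = 0) ->
  in_subalg (cm n) (take k (vars R n)) p.
Proof.
elim: n k p => [|m IH] k p hp; first by exists p.
case: k hp => [|k] hp.
  by have [a ->] := pd_const (fun i lt => hp i (leq0n i) lt); apply: in_subalg_const.
set L := take k.+1 (vars R m.+1).
have hX : in_subalg (cm m.+1) L ('X : {poly mpoly R m}).
  by apply: in_subalg_mem; rewrite /L /= inE eqxx.
have hC j : in_subalg (cm m.+1) L (((p : {poly mpoly R m})`_j)%:P).
  have [q ->] : in_subalg (cm m) (take k (vars R m)) (p : {poly mpoly R m})`_j.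
    apply: IH => i ki im; have := hp i.+1 ki im; rewrite /= => /polyP /(_ j).
    by rewrite coef_map_id0 ?(der0 (pd_der R m i)) // coef0.
  apply: (@in_subalg_trans _ _ (cm m.+1) (map polyC (take k (vars R m)))).
    by move=> x xin; apply: in_subalg_mem; rewrite /L /= inE -map_take xin orbT.
  by rewrite (evalm_comp (cm m) polyC); apply: in_subalg_evalm.
rewrite -[p]coefK poly_def; apply: (big_ind (in_subalg (cm m.+1) L)).
- by rewrite -(rmorph0 (cm m.+1)); apply: in_subalg_const.
- exact: in_subalgD.
- by move=> j _; rewrite -mul_polyC; apply: in_subalgM => //; apply: in_subalgX.
Qed.

End CharacteristicZero.

(* A measure of size on R^[n] that is positive on nonzero polynomials and
   strictly decreases under every partial derivative: for constants it is
   [c != 0], and the weight of sum_j c_j T_1^j is sum_j (j + 1) * weight c_j. *)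
Fixpoint weight (R : comNzRingType) (n : nat) {struct n} : mpoly R n -> nat :=
  match n return mpoly R n -> nat with
  | 0 => fun c => nat_of_bool (c != 0)
  | m.+1 => fun p =>
      (\sum_(j < size (p : {poly mpoly R m})) j.+1 * @weight R m (p : {poly mpoly R m})`_j)%N
  end.

Lemma weight0 (R : comNzRingType) n : @weight R n 0 = 0%N.
Proof. by case: n => [|n] /=; rewrite ?eqxx // size_poly0 big_ord0. Qed.

Lemma weight_wide (R : comNzRingType) m (p : mpoly R m.+1) N :
  (size (p : {poly mpoly R m}) <= N)%N ->
  weight p = (\sum_(j < N) j.+1 * weight (p : {poly mpoly R m})`_j)%N.
Proof.
move=> le; rewrite /= (big_ord_widen N (fun j => j.+1 * weight (p : {poly mpoly R m})`_j)%N le).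
rewrite big_mkcond /=; apply: eq_bigr => j _.
by case: ltnP => // /(nth_default 0) ->; rewrite weight0 muln0.
Qed.

Lemma weight_gt0 (R : comNzRingType) n (c : mpoly R n) : c != 0 -> (0 < weight c)%N.
Proof.
elim: n c => [|m IH] c nz /=; first by rewrite nz.
have lt : ((size (c : {poly mpoly R m})).-1 < size (c : {poly mpoly R m}))%N.
  by rewrite prednK ?size_poly_gt0.
rewrite (bigD1 (Ordinal lt)) //= addn_gt0 muln_gt0 /= IH //.
by rewrite -lead_coefE lead_coef_eq0.
Qed.

Lemma weight_mulrn (R : comNzRingType) n (c : mpoly R n) k : (weight (c *+ k) <= weight c)%N.
Proof.
elim: n c => [|m IH] c /=.
  by have [->|_] := eqVneq (c : R) 0; [rewrite mul0rn eqxx | case: (_ != 0)].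
have le : (size ((c : {poly mpoly R m}) *+ k) <= size (c : {poly mpoly R m}))%N.
  by apply/leq_sizeP => j le; rewrite coefMn nth_default // mul0rn.
rewrite -[X in (X <= _)%N]/(weight (_ : mpoly R m.+1)) (weight_wide le).
by apply: leq_sum => j _; rewrite coefMn leq_mul2l IH orbT.
Qed.

Lemma ltn_sum_ord (N : nat) (F G : nat -> nat) (k : 'I_N) :
  (forall j, F j <= G j)%N -> (F k < G k)%N ->
  (\sum_(j < N) F j < \sum_(j < N) G j)%N.
Proof.
move=> FG Fk; rewrite (bigD1 k) //= [X in (_ < X)%N](bigD1 k) //= -addSn.
by apply: leq_add => //; apply: leq_sum => j _.
Qed.

Lemma weight_pd_lt (R : comNzRingType) n i (c : mpoly R n) :
  c != 0 -> (weight (pd i c) < weight c)%N.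
Proof.
elim: n i c => [|m IH] i c nz; first by rewrite /= eqxx (negbTE nz).
have IHle i' (c' : mpoly R m) : (weight (pd i' c') <= weight c')%N.
  by have [->|/(IH i') /ltnW //] := eqVneq c' 0; rewrite (der0 (pd_der R m i')).
set N := size (c : {poly mpoly R m}).
have N_gt0 : (0 < N)%N by rewrite size_poly_gt0.
have lead : (0 < weight (c : {poly mpoly R m})`_N.-1)%N.
  by apply: weight_gt0; rewrite -lead_coefE lead_coef_eq0.
case: i => [|i].
  have le1 : (weight (pd 0 c) <=
      \sum_(j < N) j.+1 * weight (c : {poly mpoly R m})`_j.+1)%N.
    rewrite -[X in (X <= _)%N]/(weight (_ : mpoly R m.+1)).
    rewrite (weight_wide (leq_trans (size_deriv_le _) (leq_pred _))).
    by apply: leq_sum => j _; rewrite coef_deriv leq_mul2l weight_mulrn orbT.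
  apply: (leq_ltn_trans le1).
  have -> : (\sum_(j < N) j.+1 * weight (c : {poly mpoly R m})`_j.+1 =
      \sum_(j < N.+1) j * weight (c : {poly mpoly R m})`_j)%N.
    by rewrite big_ord_recl mul0n add0n.
  rewrite (weight_wide (leqnSn N)).
  have ltk : (N.-1 < N.+1)%N by rewrite ltnS leq_pred.
  apply: (@ltn_sum_ord N.+1 (fun j => j * weight (c : {poly mpoly R m})`_j)%N
     (fun j => j.+1 * weight (c : {poly mpoly R m})`_j)%N (Ordinal ltk)) => [j|] /=.
    by rewrite leq_mul2r leqnSn orbT.
  by rewrite ltn_pmul2r.
have ltk : (N.-1 < N)%N by rewrite prednK.
rewrite -[X in (X < _)%N]/(weight (_ : mpoly R m.+1)) (weight_wide (size_poly _ _)).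
apply: (@ltn_sum_ord N (fun j => j.+1 * weight (map_poly (pd i) (c : {poly mpoly R m}))`_j)%N
     (fun j => j.+1 * weight (c : {poly mpoly R m})`_j)%N (Ordinal ltk)) => [j|] /=;
  rewrite coef_map_id0 ?(der0 (pd_der R m i)) //.
  by rewrite leq_mul2l IHle orbT.
by rewrite ltn_mul2l /= IH // -lead_coefE lead_coef_eq0.
Qed.

Definition jacobian (R : comNzRingType) n (X : seq (mpoly R n)) : 'M[mpoly R n]_n :=
  \matrix_(i, l) pd l (nth 0 X i).

(* The Jacobian matrix of a coordinate system is invertible: writing
   T_j = Q_j(X), the chain rule shows that (d Q_j / d T_i)(X) is an inverse. *)
Lemma jacobian_inv (R : comNzRingType) n (X : seq (mpoly R n)) :
  coord_sys (cm n) n X -> exists M, jacobian X *m M = 1%:M.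
Proof.
move=> cs; have [Q HQ] := fin_all_exists (fun j : 'I_n => coord_sysP (var R n j) cs).
exists (\matrix_(j, i) evalm (cm n) n (pd i (Q j)) X); apply: mulmx1C.
apply/matrixP => j l; rewrite !mxE -(pd_var R (ltn_ord l) (ltn_ord j)) HQ.
by rewrite (chain_rule _ _ (pd_der R n l)); apply: eq_bigr => i _; rewrite !mxE.
Qed.

Lemma evalm_pd_eq0 (R : comNzRingType) n (X : seq (mpoly R n)) (F : mpoly R n) :
  coord_sys (cm n) n X -> evalm (cm n) n F X = 0 ->
  forall i, (i < n)%N -> evalm (cm n) n (pd i F) X = 0.
Proof.
move=> cs FX i lti; have [M JM] := jacobian_inv cs.
pose v : 'rV[mpoly R n]_n := \row_i evalm (cm n) n (pd i F) X.
have vJ : v *m jacobian X = 0.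
  apply/matrixP => z l; rewrite !mxE.
  transitivity (pd l (evalm (cm n) n F X)); last by rewrite FX (der0 (pd_der R n l)).
  by rewrite (chain_rule _ _ (pd_der R n l)); apply: eq_bigr => k _; rewrite !mxE.
have /matrixP /(_ 0 (Ordinal lti)) := congr1 (mulmx^~ M) vJ.
by rewrite -mulmxA JM mulmx1 mul0mx !mxE.
Qed.

(* Over Q, a coordinate system is algebraically independent; this follows by
   descent on the weight, since partial derivatives lower the weight and a
   polynomial with vanishing partial derivatives is constant. *)
Lemma coord_sys_indep (R : comUnitRingType) n (X : seq (mpoly R n)) (F : mpoly R n) :
  containsQ R -> coord_sys (cm n) n X -> evalm (cm n) n F X = 0 -> F = 0.
Proof.
move=> hQ cs; have [N] := ubnP (weight F); elim: N F => // N IHN F ltF FX.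
have [//|nzF] := eqVneq F 0.
have pd0 i : (i < n)%N -> pd i F = 0.
  move=> lti; apply: IHN; last exact: evalm_pd_eq0.
  exact: leq_trans (weight_pd_lt i nzF) _.
by have [a Ea] := pd_const hQ pd0; move: FX; rewrite Ea evalm_cm.
Qed.

Lemma killedP (R S : comNzRingType) (phi : {rmorphism R -> S}) d xs :
  isDer phi d -> (forall x, x \in xs -> d x = 0) -> killed phi d xs.
Proof.
move=> hd kx b [p ->]; have [dD _ dM] := hd.
apply: (evalm_ind (P := fun x => d x = 0)) => //; last exact: der_const hd.
- by move=> x y x0 y0; rewrite dD x0 y0 addr0.
- by move=> x y x0 y0; rewrite dM x0 y0 !mulr0 addr0.
Qed.

Section BaseChange.
Variables (R S : comNzRingType) (f : {rmorphism R -> S}) (n : nat).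

Lemma mapm_evalm m (p : mpoly R m) xs :
  mapm f n (evalm (cm n) m p xs) = evalm (cm n) m (mapm f m p) (map (mapm f n) xs).
Proof.
rewrite (evalm_comp (cm n) (mapm f n)) evalm_mapm.
by apply: evalm_ext => a /=; rewrite mapm_cm.
Qed.

Lemma mapm_var i : mapm f n (var R n i) = var S n i.
Proof.
elim: n i => [|m IH] [|i] /=; rewrite ?rmorph0 //; first exact: map_polyX.
by rewrite map_polyC; congr _%:P; apply: IH.
Qed.

Lemma coord_sys_map X : coord_sys (cm n) n X -> coord_sys (cm n) n (map (mapm f n) X).
Proof.
move=> cs; split=> [|c]; first by rewrite size_map cs.1.
rewrite -(evalm_vars c); apply: (@in_subalg_trans _ _ (cm n) (vars S n)).
  move=> x /(nthP 0) [i]; rewrite size_vars => lti <-; rewrite nth_vars // -mapm_var.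
  by have [q ->] := coord_sysP (var R n i) cs; rewrite mapm_evalm; apply: in_subalg_evalm.
exact: in_subalg_evalm.
Qed.

Lemma GammaD_map (D : mpoly R n -> mpoly R n) (D' : mpoly S n -> mpoly S n) r X :
  isDer (cm n) D' -> (forall b, D' (mapm f n b) = mapm f n (D b)) ->
  GammaD (cm n) n D r X -> GammaD (cm n) n D' r (map (mapm f n) X).
Proof.
move=> hD' ext [cs kil]; split; first exact: coord_sys_map.
apply: killedP => // x; rewrite -map_take => /mapP [y yin ->].
by rewrite ext (kil y) ?rmorph0 //; apply: in_subalg_mem.
Qed.

End BaseChange.

Section FractionField.
Variables (A : idomainType) (n : nat).
Local Notation K := {fraction A}.
Local Notation toK := (mapm (@tofrac A) n).

Lemma containsQ_frac : containsQ A -> containsQ K.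
Proof.
move=> hQ m m_gt0; rewrite unitfE -(rmorph_nat (@tofrac A)) tofrac_eq0.
by apply/eqP => e; have := hQ m m_gt0; rewrite e unitr0.
Qed.

Lemma tofrac_inj : injective (@tofrac A).
Proof. by move=> x y /eqP; rewrite tofrac_eq => /eqP. Qed.

Lemma subalg_descent (X : seq (mpoly A n)) k b :
  containsQ A -> coord_sys (cm n) n X -> (k <= n)%N ->
  in_subalg (cm n) (take k (map toK X)) (toK b) -> in_subalg (cm n) (take k X) b.
Proof.
move=> hQ cs kn; have csK := coord_sys_map (@tofrac A) cs.
have [H ->] := coord_sysP b cs; move=> hb.
have szk : size (take k (map toK X)) = k by rewrite size_takel // size_map cs.1.
have [G EG] := in_subalgP szk hb.
have eqK : toK H = evalm (cm n) k G (take k (vars K n)).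
  apply/eqP; rewrite -subr_eq0; apply/eqP.
  apply: (coord_sys_indep (containsQ_frac hQ) csK).
  by rewrite -evalm_atE rmorphB /= evalm_subst ?size_map ?cs.1 // -EG mapm_evalm subrr.
have pdH i : (k <= i)%N -> (i < n)%N -> pd i H = 0.
  move=> ki lti; apply: (mapm_inj (n := n) tofrac_inj); rewrite rmorph0 -pd_mapm eqK.
  exact: (pd_evalm_take_vars G ki lti).
have [P ->] := pd_sub hQ pdH.
by rewrite evalm_subst ?cs.1 //; apply: in_subalg_evalm.
Qed.

End FractionField.

Lemma has_rank_uniq (R S : comNzRingType) (phi : R -> S) n D r r' :
  has_rank phi n D r -> has_rank phi n D r' -> r = r'.
Proof. by move=> [e m] [e' m']; apply/eqP; rewrite eqn_leq m // m'. Qed.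

Lemma rigid_descent (A : idomainType) n (D : mpoly A n -> mpoly A n)
    (DK : mpoly {fraction A} n -> mpoly {fraction A} n) r X X' b :
  containsQ A -> isDer (cm n) DK ->
  (forall b, DK (mapm (@tofrac A) n b) = mapm (@tofrac A) n (D b)) ->
  has_rank (cm n) n DK r -> rigid (cm n) n DK ->
  GammaD (cm n) n D r X -> GammaD (cm n) n D r X' ->
  in_subalg (cm n) (take (n - r) X) b -> in_subalg (cm n) (take (n - r) X') b.
Proof.
move=> hQ hDK ext rK rigK GX GX' [p ->].
apply: (subalg_descent hQ GX'.1 (leq_subr r n)).
apply: (rigK r rK _ _ (GammaD_map hDK ext GX) (GammaD_map hDK ext GX') _).1.
by rewrite mapm_evalm map_take; apply: in_subalg_evalm.
Qed.

Theorem theorem1p2 (A : idomainType) (n : nat)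
    (D : mpoly A n -> mpoly A n)
    (DK : mpoly {fraction A} n -> mpoly {fraction A} n) :
  containsQ A ->
  isLND (@cm A n) D ->
  (* DK is the extension of D to K (x)_A B = K^[n] *)
  isDer (@cm {fraction A} n) DK ->
  (forall b, DK (mapm (@tofrac A) n b) = mapm (@tofrac A) n (D b)) ->
  (* rank D = rank D_K *)
  (exists r, has_rank (@cm A n) n D r /\ has_rank (@cm {fraction A} n) n DK r) ->
  rigid (@cm {fraction A} n) n DK ->
  rigid (@cm A n) n D.
Proof.
move=> hQ _ hDK ext [r [rD rDK]] rigK r' rD' X X' GX GX' b.
rewrite -(has_rank_uniq rD rD') in GX GX' *.
by split; [exact: (rigid_descent hQ hDK ext rDK rigK GX GX')
          | exact: (rigid_descent hQ hDK ext rDK rigK GX' GX)].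
Qed.
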